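(* Let $N,M\ge 1$, let $\delta\in(0,1)$, $\eta>0$ and $\epsilon\ge 0$. Let $\mathbf x_\star\in\mathbb C^N$ with $\|\mathbf x_\star\|_2=1$, let $\mathbf a_1,\dots,\mathbf a_M\in\mathbb C^N$, and let $b_i=|\mathbf a_i^*\mathbf x_\star|^2+\xi_i$ for $1\le i\le M$, where $\xi_i\in[0,\eta^{-1}]$. Let $\mathbf a_0\in\mathbb C^N\setminus\{\mathbf 0\}$ be such that $\mathbf a_0^*\mathbf x_\star$ is a positive real number and $|\mathbf a_0^*\mathbf x_\star|\ge\delta\|\mathbf a_0\|_2\|\mathbf x_\star\|_2$. Define $$\mathcal R_\delta=\left\{\mathbf h\in\mathbb C^N:\ \big\|\mathbf h-(\mathbf x_\star^*\mathbf h)\mathbf x_\star\big\|_2\ge\delta\,\big|\mathrm{Im}(\mathbf x_\star^*\mathbf h)\big|\right\}.$$ Suppose that every $\mathbf h\in\mathcal R_\delta$ with $\|\mathbf h\|_2>\epsilon$ violates at least one of the inequalities $$\langle\mathbf a_0,\mathbf h\rangle\ge 0,\qquad \langle\mathbf a_i\mathbf a_i^*\mathbf x_\star,\mathbf h\rangle\le\tfrac12\eta^{-1}\quad(1\le i\le M).$$ Then every solution $\widehat{\mathbf x}$ of the convex program $$\max_{\mathbf x\in\mathbb C^N}\ \langle\mathbf a_0,\mathbf x\rangle\quad\text{subject to}\quad|\mathbf a_i^*\mathbf x|^2\le b_i,\ 1\le i\le M,$$ satisfies $\|\widehat{\mathbf x}-\mathbf x_\star\|_2\le\epsilon$.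
   Context: $\mathbb C^N$ is regarded as a $2N$-dimensional real inner-product space with inner product $\langle\mathbf x_1,\mathbf x_2\rangle=\mathrm{Re}(\mathbf x_1^*\mathbf x_2)$. $\mathbf x^*$ denotes the conjugate transpose. *)

(* C^N is modelled as column vectors 'cV[C]_N over an
   arbitrary numClosedFieldType C (e.g. the complex numbers). *)
From HB Require Import structures.
From mathcomp Require Import all_boot all_order all_algebra.
Set Implicit Arguments. Unset Strict Implicit. Unset Printing Implicit Defensive.
Import Order.TTheory GRing.Theory Num.Theory.
Local Open Scope ring_scope.

Definition cdot (C : numClosedFieldType) (N : nat) (x y : 'cV[C]_N) : C :=
  \sum_(i < N) (x i 0)^* * y i 0.

Definition rinner (C : numClosedFieldType) (N : nat) (x y : 'cV[C]_N) : C :=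
  'Re (cdot x y).

Definition norm2 (C : numClosedFieldType) (N : nat) (x : 'cV[C]_N) : C :=
  sqrtC (\sum_(i < N) `|x i 0| ^+ 2).

Definition Rdelta (C : numClosedFieldType) (N : nat) (delta : C) (xs : 'cV[C]_N) :
  'cV[C]_N -> Prop :=
  fun h => delta * `|'Im (cdot xs h)| <= norm2 (h - cdot xs h *: xs).

Definition feasible (C : numClosedFieldType) (N M : nat)
  (a : 'I_M -> 'cV[C]_N) (b : 'I_M -> C) (x : 'cV[C]_N) : Prop :=
  forall i : 'I_M, `|cdot (a i) x| ^+ 2 <= b i.

Definition is_solution (C : numClosedFieldType) (N M : nat) (a0 : 'cV[C]_N)
  (a : 'I_M -> 'cV[C]_N) (b : 'I_M -> C) (xhat : 'cV[C]_N) : Prop :=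
  feasible a b xhat /\
  forall x, feasible a b x -> rinner a0 x <= rinner a0 xhat.

(** Write [h := xhat - xs].  Since [xs] itself is feasible, optimality of
    [xhat] gives [<a0, h> >= 0]; expanding the constraint
    [|a_i^* (xs + h)|^2 <= |a_i^* xs|^2 + xi_i] gives
    [<a_i a_i^* xs, h> <= xi_i / 2 <= 1/(2 eta)].  Rotating [xhat] by a unit
    scalar preserves feasibility, so at an optimum [a0^* xhat] is a nonnegative
    real; as [a0^* xs > 0] too, [a0^* h] is real.  Hence, with
    [w := h - (xs^* h) xs], [a0^* xs * |Im (xs^* h)| = |Im (a0^* w)|
    <= ||a0|| ||w||], and [delta ||a0|| <= a0^* xs] puts [h] in [R_delta].  The
    hypothesis on [R_delta] then forbids [||h|| > eps]. *)
From mathcomp Require Import all_boot all_order all_algebra.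
From mathcomp.algebra_tactics Require Import ring.
Import Order.TTheory GRing.Theory Num.Theory.
Local Open Scope ring_scope.

Section ComplexScalars.
Context {C : numClosedFieldType}.
Implicit Types c d t z : C.

Lemma normC_Im_le z : `|'Im z| <= `|z|.
Proof.
rewrite -(ler_pXn2r (_ : 0 < 2)%N) ?nnegrE ?normr_ge0 //.
rewrite (real_normK (Creal_Im z)) normC2_Re_Im lerDr.
by rewrite real_exprn_even_ge0 ?Creal_Re.
Qed.

Lemma norm_le_Re_ge0 z : `|z| <= 'Re z -> 0 <= z.
Proof.
move=> le_norm_Re; rewrite -(eq_leif (leif_Re_Creal z)) eq_le le_norm_Re.
by rewrite (leif_Re_Creal z).
Qed.

Lemma normCDK c d : `|c + d| ^+ 2 = `|c| ^+ 2 + 2 * 'Re (c^* * d) + `|d| ^+ 2.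
Proof. by rewrite !normCK ReE rmorphD /= rmorphM /= conjCK; field. Qed.

Lemma Re_cross_le c d t : `|c + d| ^+ 2 <= `|c| ^+ 2 + t -> 'Re (c^* * d) <= 2^-1 * t.
Proof.
rewrite normCDK -addrA lerD2l => le_t.
rewrite -(ler_pM2l (_ : 0 < 2)) ?ltr0n // mulrA divff ?pnatr_eq0 // mul1r.
by apply: le_trans le_t; rewrite lerDl exprn_ge0.
Qed.

End ComplexScalars.

Section InnerProduct.
Context {C : numClosedFieldType} {N : nat}.
Implicit Types (x y z : 'cV[C]_N) (c : C).

Lemma cdotDr x y z : cdot x (y + z) = cdot x y + cdot x z.
Proof. by rewrite /cdot -big_split; apply: eq_bigr => i _; rewrite mxE mulrDr. Qed.

Lemma cdotBr x y z : cdot x (y - z) = cdot x y - cdot x z.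
Proof. by rewrite /cdot -sumrB; apply: eq_bigr => i _; rewrite !mxE mulrBr. Qed.

Lemma cdotZr x y c : cdot x (c *: y) = c * cdot x y.
Proof. by rewrite /cdot mulr_sumr; apply: eq_bigr => i _; rewrite mxE mulrCA. Qed.

Lemma cdotBl x y z : cdot (x - y) z = cdot x z - cdot y z.
Proof. by rewrite /cdot -sumrB; apply: eq_bigr => i _; rewrite !mxE rmorphB mulrBl. Qed.

Lemma cdotZl x y c : cdot (c *: x) y = c^* * cdot x y.
Proof. by rewrite /cdot mulr_sumr; apply: eq_bigr => i _; rewrite mxE rmorphM mulrA. Qed.

Lemma conj_cdot x y : (cdot x y)^* = cdot y x.
Proof.
rewrite /cdot rmorph_sum; apply: eq_bigr => i _.
by rewrite rmorphM /= conjCK mulrC.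
Qed.

Lemma cdotxx x : cdot x x = \sum_(i < N) `|x i 0| ^+ 2.
Proof. by apply: eq_bigr => i _; rewrite normCKC. Qed.

Lemma cdotxx_ge0 x : 0 <= cdot x x.
Proof. by rewrite cdotxx sumr_ge0 // => i _; rewrite exprn_ge0. Qed.

Lemma cdotxx_norm2 x : cdot x x = norm2 x ^+ 2.
Proof. by rewrite /norm2 sqrtCK cdotxx. Qed.

Lemma norm2_ge0 x : 0 <= norm2 x.
Proof. by rewrite /norm2 sqrtC_ge0 -cdotxx cdotxx_ge0. Qed.

Lemma cdotxx_eq0 x y : cdot x x = 0 -> cdot x y = 0.
Proof.
rewrite cdotxx => /psumr_eq0P x_eq0; rewrite /cdot big1 // => i _.
have /eqP := x_eq0 (fun j _ => exprn_ge0 _ (normr_ge0 _)) i isT.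
by rewrite expf_eq0 /= normr_eq0 => /eqP ->; rewrite rmorph0 mul0r.
Qed.

Lemma cauchy_schwarz2 x y : `|cdot x y| ^+ 2 <= cdot x x * cdot y y.
Proof.
set s := cdot x x; set c := cdot x y.
have s_ge0 : 0 <= s by apply: cdotxx_ge0.
have [s0|s_neq0] := eqVneq s 0.
  by rewrite /c cdotxx_eq0 // normr0 expr0n /= s0 mul0r.
have s_gt0 : 0 < s by rewrite lt_def s_neq0 s_ge0.
(* expand [0 <= ||s y - c x||^2] *)
have := cdotxx_ge0 (s *: y - c *: x).
rewrite !(cdotBl, cdotBr, cdotZl, cdotZr) -/s -/c -(conj_cdot x y) -/c.
rewrite (geC0_conj s_ge0) [c * s]mulrC subrr mulr0 subr0.
by rewrite pmulr_rge0 // subr_ge0 -normCK.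
Qed.

Lemma cauchy_schwarz x y : `|cdot x y| <= norm2 x * norm2 y.
Proof.
rewrite -(ler_pXn2r (_ : 0 < 2)%N) ?nnegrE ?mulr_ge0 ?norm2_ge0 //.
by rewrite exprMn -!cdotxx_norm2 cauchy_schwarz2.
Qed.

Lemma rinner_rank1_le x y h t :
  `|cdot x (y + h)| ^+ 2 <= `|cdot x y| ^+ 2 + t ->
  rinner (cdot x y *: x) h <= 2^-1 * t.
Proof. by rewrite cdotDr /rinner cdotZl; apply: Re_cross_le. Qed.

Lemma Rdelta_of_Im_cdot_eq0 {delta : C} {a0 xs h : 'cV[C]_N} :
  0 <= delta -> 0 < cdot a0 xs -> delta * norm2 a0 <= cdot a0 xs ->
  'Im (cdot a0 h) = 0 -> Rdelta delta xs h.
Proof.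
move=> delta_ge0 c0_gt0 le_c0 Im_h0; rewrite /Rdelta.
set al := cdot xs h; set w := h - al *: xs; set c0 := cdot a0 xs.
have Im_w : `|'Im (cdot a0 w)| = c0 * `|'Im al|.
  rewrite cdotBr cdotZr raddfB /= Im_h0 sub0r (ImMr (gtr0_real c0_gt0)).
  by rewrite normrN normrM (gtr0_norm c0_gt0) mulrC.
rewrite -(ler_pM2l c0_gt0) mulrCA -Im_w.
have Im_le := le_trans (normC_Im_le (cdot a0 w)) (cauchy_schwarz a0 w).
apply: le_trans (ler_wpM2l delta_ge0 Im_le) _.
by rewrite mulrA ler_wpM2r ?norm2_ge0.
Qed.

End InnerProduct.

Section ConvexProgram.
Context {C : numClosedFieldType} {N M : nat}.
Context {a : 'I_M -> 'cV[C]_N} {b : 'I_M -> C}.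

Lemma feasibleZ {u : C} {x} : `|u| = 1 -> feasible a b x -> feasible a b (u *: x).
Proof. by move=> u1 fx i; rewrite cdotZr normrM u1 mul1r. Qed.

Lemma solution_ascent {a0 xhat x} :
  is_solution a0 a b xhat -> feasible a b x -> 0 <= rinner a0 (xhat - x).
Proof. by move=> [_ opt] fx; rewrite /rinner cdotBr raddfB subr_ge0 opt. Qed.

Lemma solution_objective_ge0 {a0 xhat} : is_solution a0 a b xhat -> 0 <= cdot a0 xhat.
Proof.
move=> [fxhat opt]; set z := cdot a0 xhat; apply: norm_le_Re_ge0.
have [->|z_neq0] := eqVneq z 0; first by rewrite normr0 raddf0.
have nz_neq0 : `|z| != 0 by rewrite normr_eq0.
(* the phase [u] turns the objective value [z] into [|z|] *)
pose u := z^* / `|z|.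
have u1 : `|u| = 1 by rewrite normrM normfV norm_conjC normr_id divff.
have uz : u * z = `|z| by rewrite /u mulrAC -normCKC expr2 mulfK.
have := opt _ (feasibleZ u1 fxhat).
by rewrite /rinner cdotZr -/z uz (Creal_ReP _ (normr_real z)).
Qed.

End ConvexProgram.

Theorem lemma1 (C : numClosedFieldType) (N M : nat) (hN : (0 < N)%N) (hM : (0 < M)%N)
  (delta eta eps : C)
  (hdelta0 : 0 < delta) (hdelta1 : delta < 1) (heta : 0 < eta) (heps : 0 <= eps)
  (xs : 'cV[C]_N) (hxs : norm2 xs = 1)
  (a : 'I_M -> 'cV[C]_N) (xi : 'I_M -> C)
  (hxi : forall i, 0 <= xi i /\ xi i <= eta^-1)
  (b : 'I_M -> C) (hb : forall i, b i = `|cdot (a i) xs| ^+ 2 + xi i)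
  (a0 : 'cV[C]_N) (ha0 : a0 != 0)
  (ha0pos : 0 < cdot a0 xs)
  (ha0delta : delta * norm2 a0 * norm2 xs <= `|cdot a0 xs|)
  (hcone : forall h : 'cV[C]_N, Rdelta delta xs h -> eps < norm2 h ->
     ~ (0 <= rinner a0 h /\
        forall i, rinner (cdot (a i) xs *: a i) h <= 2^-1 * eta^-1)) :
  forall xhat : 'cV[C]_N, is_solution a0 a b xhat -> norm2 (xhat - xs) <= eps.
Proof.
move=> xhat sol; set h := xhat - xs.
have fxs : feasible a b xs by move=> i; rewrite hb lerDl; case: (hxi i).
have a0h_ge0 : 0 <= rinner a0 h := solution_ascent sol fxs.
have constraints i : rinner (cdot (a i) xs *: a i) h <= 2^-1 * eta^-1.
  apply: rinner_rank1_le; rewrite /h addrC subrK.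
  by rewrite (le_trans (sol.1 i)) // hb lerD2l; case: (hxi i).
have Rh : Rdelta delta xs h.
  apply: (Rdelta_of_Im_cdot_eq0 (ltW hdelta0) ha0pos).
    by move: ha0delta; rewrite hxs mulr1 (gtr0_norm ha0pos).
  rewrite /h cdotBr raddfB /= (Creal_ImP _ (gtr0_real ha0pos)).
  by rewrite (Creal_ImP _ (ger0_real (solution_objective_ge0 sol))) subrr.
rewrite real_leNgt ?ger0_real ?norm2_ge0 //; apply/negP => lt_eps.
exact: hcone h Rh lt_eps (conj a0h_ge0 constraints).
Qed.
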